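(* Consider the following model. Particles occupy distinct nodes of the infinite regular triangular grid $G_\Delta$; the set of occupied nodes is connected and may contain holes (i.e., it need not be simply connected). Particles are anonymous, start in identical states, run the same deterministic algorithm, have constant memory and cannot move. Each particle has six ports, labelled $0,\dots,5$, one for each grid edge incident to its node, such that port $0$ leads to the East neighbour and port $3$ to the West neighbour for every particle (common direction), and ports $i$ and $i+1 \bmod 6$ lead to adjacent grid nodes; the circular orientation of the remaining labels (clockwise or counterclockwise) may differ from particle to particle (no common chirality). Particles communicate only by exchanging messages with particles at adjacent nodes, and both sender and receiver know the local port through which a message is sent/received. Then there is no terminating algorithm (one in which, after finitely many steps, every particle has irrevocably entered a final state, exactly one particle being in the final state leader) that solves Leader Election in every such configuration under a fair synchronous scheduler.
   Context: A fair synchronous scheduler activates all particles simultaneously in every step. In the triangular grid, the six neighbours of a node are in the directions East, West, North East, North West, South East and South West. Leader Election means that eventually exactly one particle is in the state leader. *)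

From mathcomp Require Import all_boot all_order all_algebra.
Set Implicit Arguments. Unset Strict Implicit. Unset Printing Implicit Defensive.
Import Order.TTheory GRing.Theory Num.Theory.
Local Open Scope ring_scope.

(* Nodes of the triangular grid in axial coordinates: (x, y) sits at the
   Cartesian point (x + y/2, y*sqrt(3)/2). *)
Definition node := (int * int)%type.

(* The six directions in counterclockwise order:
   0 = E, 1 = NE, 2 = NW, 3 = W, 4 = SW, 5 = SE. *)
Definition dir (k : 'I_6) : node :=
  match nat_of_ord k with
  | 0%N => (1, 0)
  | 1%N => (0, 1)
  | 2%N => (-1, 1)
  | 3%N => (-1, 0)
  | 4%N => (0, -1)
  | _ => (1, -1)
  end.

Definition add_node (u d : node) : node := (u.1 + d.1, u.2 + d.2).

Definition adjacent (u v : node) : bool :=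
  [exists k : 'I_6, v == add_node u (dir k)].

(* If c = true
   the ports go counterclockwise (port i = direction i), otherwise clockwise
   (port i = direction -i mod 6).  These are exactly the two labellings
   allowed by the model. *)
Definition port_to_dir (c : bool) (i : 'I_6) : 'I_6 :=
  if c then i else inord ((6 - nat_of_ord i) %% 6)%N.

Definition port_dir (c : bool) (i : 'I_6) : node := dir (port_to_dir c i).

Definition opp_dir (k : 'I_6) : 'I_6 := inord ((nat_of_ord k + 3) %% 6)%N.

Definition connected_nodes (S : seq node) : Prop :=
  forall u v, u \in S -> v \in S ->
    exists p : seq node, [/\ path adjacent u p, last u p = v & all (mem S) p].

Definition valid_config (S : seq node) : Prop :=
  [/\ uniq S, S != [::] & connected_nodes S].

(* A deterministic constant-memory algorithm: finite state set Q, finite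
   message alphabet M, initial state q0, and transition function taking the
   current state and the messages received on each port (None = nothing
   received) to the new state and the messages to send on each port. *)
Definition transition (Q M : Type) :=
  Q -> ('I_6 -> option M) -> Q * ('I_6 -> option M).

(* Global state of a synchronous execution: state of each node and the
   messages it sent in the last round on each of its ports. *)
Definition gstate (Q M : Type) := ((node -> Q) * (node -> 'I_6 -> option M))%type.

Section Exec.
Variables (Q M : Type) (q0 : Q) (delta : transition Q M)
          (S : seq node) (chi : node -> bool).

Definition inbox (out : node -> 'I_6 -> option M) (w : node) (j : 'I_6)
  : option M :=
  let k := port_to_dir (chi w) j in
  let u := add_node w (dir k) in
  if u \in S then
    let i := port_to_dir (chi u) (opp_dir k) in  (* port_to_dir is an involution *)
    out u i
  else None.

Definition init_gstate : gstate Q M := (fun _ => q0, fun _ _ => None).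

(* one fair synchronous round: every particle is activated *)
Definition step (g : gstate Q M) : gstate Q M :=
  (fun w => (delta (g.1 w) (inbox g.2 w)).1,
   fun w => (delta (g.1 w) (inbox g.2 w)).2).

Definition exec (t : nat) : gstate Q M := iter t step init_gstate.

Definition st (t : nat) (v : node) : Q := (exec t).1 v.
End Exec.

Definition terminating_LE (Q : eqType) (M : Type) (q0 : Q) (delta : transition Q M)
  (final : pred Q) (leader : Q) (S : seq node) (chi : node -> bool) : Prop :=
  (forall t v, v \in S -> final (st q0 delta S chi t v) ->
     forall t', (t <= t')%N -> st q0 delta S chi t' v = st q0 delta S chi t v)
  /\ exists T : nat,
       (forall v, v \in S -> final (st q0 delta S chi T v))
       /\ count (fun v => st q0 delta S chi T v == leader :> Q) S = 1%N.

Definition solves_LE (Q M : finType) (q0 : Q) (delta : transition Q M)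
  (final : pred Q) (leader : Q) : Prop :=
  forall (S : seq node) (chi : node -> bool),
    valid_config S -> terminating_LE q0 delta final leader S chi.

From mathcomp Require Import all_boot all_order all_algebra.
From mathcomp Require Import zify.
From Stdlib Require Import FunctionalExtensionality.
Set Implicit Arguments. Unset Strict Implicit. Unset Printing Implicit Defensive.
Import GRing.Theory.

(* Six particles around an empty node, all with the same chirality, form a
   ring; a terminating algorithm elects one of them, say at time T.  The
   reflection in the East-West axis keeps ports 0 and 3 and swaps the two
   chiralities, so the ring can be unrolled into an arbitrarily long zigzag
   path whose particles, given suitable chiralities, see through the same
   ports the same neighbours as their counterparts on the ring: the path
   leaves every node by the port the ring uses, and the chirality changes
   only across East-West edges.  A particle at distance at least t from both
   ends of the path cannot tell it from the ring during the first t rounds, so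
   on a path of length about 7T two particles are in the final state leader
   at time T, and stay there. *)

(* [port_to_dir] and an enumeration of ['I_6] written with ['Z_6] arithmetic,
   which, unlike [inord] and [enum], reduces under [vm_compute]. *)
Definition orient (c : bool) (j : 'I_6) : 'I_6 := if c then j else (- j)%R.

Definition ports : seq 'I_6 := [seq inZp n | n <- iota 0 6].

Lemma orientK c : involutive (orient c).
Proof. by case: c => j; rewrite /orient ?opprK. Qed.

Lemma port_to_dirE c j : port_to_dir c j = orient c j.
Proof. by case: c => //; apply: val_inj; rewrite /= inordK ?ltn_pmod. Qed.

Lemma opp_dirE k : opp_dir k = (k + 3)%R.
Proof. by apply: val_inj; rewrite /= inordK ?ltn_pmod. Qed.

Lemma mem_ports j : j \in ports.
Proof. by apply/mapP; exists (val j); rewrite ?valZpK // mem_iota ltn_ord. Qed.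

Lemma all_portsP (P : pred 'I_6) : all P ports -> forall j, P j.
Proof. by move/allP=> P_ports j; apply: P_ports; apply: mem_ports. Qed.

Lemma all_residuesP (P : pred nat) : all P (iota 0 6) -> forall n, P (n %% 6).
Proof. by move/allP=> P_residues n; apply: P_residues; rewrite mem_iota ltn_pmod. Qed.

Lemma dirN3 k : dir (k + 3)%R = (- dir k)%R.
Proof. by apply/eqP; move: k; apply: all_portsP; vm_compute. Qed.

Lemma dir_inj : injective dir.
Proof.
have dir_injb : all (fun k => all (fun k' => (dir k == dir k') ==> (k == k')) ports) ports.
  by vm_compute.
move=> k k' E; apply/eqP.
by move: (all_portsP dir_injb k) => /all_portsP/(_ k'); rewrite E eqxx.
Qed.

Lemma add3K (k : 'I_6) : (k + 3 + 3)%R = k.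
Proof. by rewrite -addrA (_ : 3 + 3 = 0)%R ?addr0 //; apply: val_inj. Qed.

Definition port_nbr (chi : node -> bool) (w : node) (j : 'I_6) : node :=
  (w + dir (orient (chi w) j))%R.

Definition back_port (chi : node -> bool) (w : node) (j : 'I_6) : 'I_6 :=
  orient (chi (port_nbr chi w j)) (orient (chi w) j + 3)%R.

Lemma inboxE (M : Type) S chi (out : node -> 'I_6 -> option M) w j :
  inbox S chi out w j =
  if port_nbr chi w j \in S then out (port_nbr chi w j) (back_port chi w j) else None.
Proof. by rewrite /inbox !port_to_dirE opp_dirE. Qed.

Lemma port_nbr_inj chi w : injective (port_nbr chi w).
Proof. by move=> j j' /addrI /dir_inj /(can_inj (orientK _)). Qed.

Lemma port_nbrK chi w j : port_nbr chi (port_nbr chi w j) (back_port chi w j) = w.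
Proof. by rewrite {1}/port_nbr /back_port orientK dirN3 /port_nbr addrK. Qed.

Lemma back_portK chi w j : back_port chi (port_nbr chi w j) (back_port chi w j) = j.
Proof. by rewrite {1}/back_port port_nbrK orientK add3K orientK. Qed.

Lemma add_nodeE u d : add_node u d = (u + d)%R.
Proof. by []. Qed.

Lemma adjacent_port_nbr chi w j : adjacent w (port_nbr chi w j).
Proof. by apply/existsP; exists (orient (chi w) j). Qed.

Lemma adjacent_sym u v : adjacent u v -> adjacent v u.
Proof.
case/existsP=> k /eqP ->; apply/existsP; exists (k + 3)%R.
by rewrite !add_nodeE dirN3 addrK.
Qed.

Fixpoint port_walk (chi : node -> bool) (p : nat -> 'I_6) (o : node) (n : nat) : node :=
  if n is m.+1 then port_nbr chi (port_walk chi p o m) (p m) else o.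

Definition entry_port chi p o n : 'I_6 := back_port chi (port_walk chi p o n) (p n).

Lemma port_walkS chi p o n :
  port_walk chi p o n.+1 = port_nbr chi (port_walk chi p o n) (p n).
Proof. by []. Qed.

Lemma entry_portE chi p o n :
  back_port chi (port_walk chi p o n) (p n) = entry_port chi p o n.
Proof. by []. Qed.

Lemma port_nbr_entry chi p o n :
  port_nbr chi (port_walk chi p o n.+1) (entry_port chi p o n) = port_walk chi p o n.
Proof. exact: port_nbrK. Qed.

Lemma back_port_entry chi p o n :
  back_port chi (port_walk chi p o n.+1) (entry_port chi p o n) = p n.
Proof. exact: back_portK. Qed.

Lemma mem_walk_nbrs chi p o n j :
  (port_nbr chi (port_walk chi p o n.+1) j
     \in [:: port_walk chi p o n.+2; port_walk chi p o n])
  = (j == p n.+1) || (j == entry_port chi p o n).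
Proof.
rewrite !inE (port_walkS _ _ _ n.+1) -(port_nbr_entry chi p o n).
by rewrite !(inj_eq (@port_nbr_inj _ _)).
Qed.

Lemma periodic_mod (T : Type) (f : nat -> T) d :
  (forall n, f (n + d) = f n) -> forall n, f n = f (n %% d).
Proof.
move=> f_period n; rewrite {1}(divn_eq n d).
by elim: (n %/ d) => [|q IH]; rewrite ?mul0n ?add0n // mulSnr addnAC f_period.
Qed.

Section PeriodicWalk.
Variables (chi : node -> bool) (p : nat -> 'I_6) (o v : node) (d : nat).
Hypothesis chiD : forall u, chi (u + v)%R = chi u.
Hypothesis p_period : forall n, p (n + d) = p n.
Hypothesis walk_period : port_walk chi p o d = (o + v)%R.

Lemma port_nbrD w j : port_nbr chi (w + v)%R j = (port_nbr chi w j + v)%R.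
Proof. by rewrite /port_nbr chiD addrAC. Qed.

Lemma back_portD w j : back_port chi (w + v)%R j = back_port chi w j.
Proof. by rewrite /back_port port_nbrD !chiD. Qed.

Lemma port_walk_period n : port_walk chi p o (n + d) = (port_walk chi p o n + v)%R.
Proof. by elim: n => [|n IH] //; rewrite addSn /= IH p_period port_nbrD. Qed.

Lemma port_walk_shift q n :
  port_walk chi p o (q * d + n) = (port_walk chi p o n + v *+ q)%R.
Proof.
elim: q => [|q IH]; first by rewrite mul0n add0n mulr0n addr0.
by rewrite mulSnr addnAC port_walk_period IH mulrSr addrA.
Qed.

Lemma entry_port_period n : entry_port chi p o (n + d) = entry_port chi p o n.
Proof. by rewrite /entry_port port_walk_period p_period back_portD. Qed.

End PeriodicWalk.

Definition walk_nbrs (S : seq node) (chi : node -> bool) (g : nat -> node) (n : nat) :=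
  forall j, (port_nbr chi (g n.+1) j \in S) = (port_nbr chi (g n.+1) j \in [:: g n.+2; g n]).

Lemma exec_succ (Q M : Type) (q0 : Q) (delta : transition Q M) S chi t w :
  ((exec q0 delta S chi t.+1).1 w, (exec q0 delta S chi t.+1).2 w)
  = delta ((exec q0 delta S chi t).1 w) (inbox S chi (exec q0 delta S chi t).2 w).
Proof. by rewrite /exec /=; case: (delta _ _). Qed.

Section WalkSimulation.
Variables (Q M : Type) (q0 : Q) (delta : transition Q M) (p : nat -> 'I_6).
Variables (SA SB : seq node) (chiA chiB : node -> bool) (oA oB : node) (N : nat).
Local Notation a := (port_walk chiA p oA).
Local Notation b := (port_walk chiB p oB).
Hypothesis entry_portsE : forall n, entry_port chiB p oB n = entry_port chiA p oA n.
Hypothesis nbrsA : forall n, n.+1 < N -> walk_nbrs SA chiA a n.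
Hypothesis nbrsB : forall n, n.+1 < N -> walk_nbrs SB chiB b n.

(* Port [p n.+1] leads to node [n.+2], the entry port of node [n.+1] back to
   node [n], and every other port to an empty node, on both walks alike. *)
Lemma inbox_port_walk (outA outB : node -> 'I_6 -> option M) n : n.+1 < N ->
  outB (b n) = outA (a n) -> outB (b n.+2) = outA (a n.+2) ->
  inbox SB chiB outB (b n.+1) = inbox SA chiA outA (a n.+1).
Proof.
move=> lt_nN prev next; apply: functional_extensionality => j.
rewrite !inboxE (nbrsA lt_nN) (nbrsB lt_nN) !mem_walk_nbrs -(entry_portsE n).
have [->|_] := eqVneq j (p n.+1).
  by rewrite /= -!port_walkS !entry_portE (entry_portsE n.+1) next.
have [->|//] := eqVneq j (entry_port chiB p oB n).
by rewrite port_nbr_entry back_port_entry entry_portsE port_nbr_entry back_port_entry prev.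
Qed.

Lemma exec_port_walk t i : t <= i -> i + t <= N ->
  ((exec q0 delta SB chiB t).1 (b i), (exec q0 delta SB chiB t).2 (b i))
  = ((exec q0 delta SA chiA t).1 (a i), (exec q0 delta SA chiA t).2 (a i)).
Proof.
elim: t i => [|t IH] [|n] // le_tn le_nN.
case: (IH n.+1 (ltnW le_tn) ltac:(lia)) => same _.
case: (IH n ltac:(lia) ltac:(lia)) => _ prev.
case: (IH n.+2 ltac:(lia) ltac:(lia)) => _ next.
by rewrite !exec_succ same (inbox_port_walk _ prev next) //; lia.
Qed.

End WalkSimulation.

Definition walk_config (g : nat -> node) (N : nat) : seq node := [seq g n | n <- iota 0 N.+1].

Lemma mem_walk_config g N n : n <= N -> g n \in walk_config g N.
Proof. by move=> le_nN; apply: map_f; rewrite mem_iota. Qed.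

Definition reachable (S : seq node) (u v : node) :=
  exists p : seq node, [/\ path adjacent u p, last u p = v & all (mem S) p].

Lemma reachable_trans S u v w : reachable S u v -> reachable S v w -> reachable S u w.
Proof.
move=> [p [p_path p_last p_in]] [q [q_path q_last q_in]]; exists (p ++ q).
by rewrite cat_path last_cat p_last p_path q_path q_last all_cat p_in q_in.
Qed.

Lemma reachable_adjacent S u v : adjacent u v -> v \in S -> reachable S u v.
Proof. by move=> uv vS; exists [:: v]; rewrite /= uv vS. Qed.

Lemma walk_connected (g : nat -> node) N :
  (forall n, adjacent (g n) (g n.+1)) -> connected_nodes (walk_config g N).
Proof.
move=> g_adj; pose S := walk_config g N.
have hub n : n <= N -> reachable S (g 0) (g n) /\ reachable S (g n) (g 0).
  elim: n => [|n IH] le_nN; first by split; exists [::].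
  have [from0 to0] := IH (ltnW le_nN); have gS := mem_walk_config g le_nN.
  split; first exact: reachable_trans from0 (reachable_adjacent (g_adj n) gS).
  apply: reachable_trans to0.
  exact: reachable_adjacent (adjacent_sym (g_adj n)) (mem_walk_config g (ltnW le_nN)).
move=> _ _ /mapP[m + ->] /mapP[n + ->]; rewrite !mem_iota !ltnS => le_mN le_nN.
exact: reachable_trans (hub m le_mN).2 (hub n le_nN).1.
Qed.

Lemma port_walk_connected chi p o N : connected_nodes (walk_config (port_walk chi p o) N).
Proof. by apply: walk_connected => n; apply: adjacent_port_nbr. Qed.

Definition hex_port (n : nat) : 'I_6 := inZp (n + 2).

Lemma hex_port_period n : hex_port (n + 6) = hex_port n.
Proof. by apply: val_inj; rewrite /= addnAC modnDr. Qed.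

(* [ring_node n] is [dir (n mod 6)]: the ring surrounds the empty origin. *)
Definition ring_node : nat -> node := port_walk (fun=> true) hex_port (1, 0)%R.

Definition ring : seq node := walk_config ring_node 5.

Lemma ring_node6 : ring_node 6 = (ring_node 0 + 0)%R.
Proof. by apply/eqP; vm_compute. Qed.

Lemma ring_node_mod n : ring_node n = ring_node (n %% 6).
Proof.
apply: periodic_mod => m.
by rewrite /ring_node (port_walk_period _ hex_port_period ring_node6) ?addr0.
Qed.

Lemma ring_nbrs n : walk_nbrs ring (fun=> true) ring_node n.
Proof.
have ring_nbrs_mod6 : all (fun r => all (fun j =>
    (port_nbr (fun=> true) (ring_node (r + 1)) j \in ring) ==
    (port_nbr (fun=> true) (ring_node (r + 1)) j \in [:: ring_node (r + 2); ring_node r]))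
    ports) (iota 0 6).
  by vm_compute.
have ring_nodeD k : ring_node (n + k) = ring_node (n %% 6 + k).
  by rewrite ring_node_mod [RHS]ring_node_mod modnDml.
move=> j; rewrite -[n.+2]addn2 -[n.+1]addn1 !ring_nodeD [ring_node n]ring_node_mod.
exact/eqP/(all_portsP (all_residuesP ring_nbrs_mod6 n)).
Qed.

Lemma ring_valid : valid_config ring.
Proof. by split; [vm_compute | | apply: port_walk_connected]. Qed.

(* [2 x + y] is invariant under the period [(2, -4)] of the zigzag; it is at
   most [-3] exactly at the nodes of residue 2, 3, 4 modulo 6. *)
Definition zigzag_chirality (v : node) : bool := (2 * v.1 + v.2 <= -3)%R.

Definition zigzag : nat -> node := port_walk zigzag_chirality hex_port 0%R.

Definition zigzag_period : node := (2, -4)%R.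

Lemma zigzag_chiralityD u : zigzag_chirality (u + zigzag_period)%R = zigzag_chirality u.
Proof. by rewrite /zigzag_chirality /=; congr (_ <= _)%R; lia. Qed.

Lemma zigzag6 : zigzag 6 = (zigzag 0 + zigzag_period)%R.
Proof. by apply/eqP; vm_compute. Qed.

Lemma zigzag_shift q n : zigzag (q * 6 + n) = (zigzag n + zigzag_period *+ q)%R.
Proof. exact: port_walk_shift zigzag_chiralityD hex_port_period zigzag6 q n. Qed.

Lemma zigzag_entry_port n :
  entry_port zigzag_chirality hex_port 0%R n = entry_port (fun=> true) hex_port (1, 0)%R n.
Proof.
have entry_ports_mod6 : all (fun r =>
    entry_port zigzag_chirality hex_port 0%R r == entry_port (fun=> true) hex_port (1, 0)%R r)
    (iota 0 6).
  by vm_compute.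
rewrite (periodic_mod (entry_port_period zigzag_chiralityD hex_port_period zigzag6)).
rewrite [RHS](periodic_mod (entry_port_period _ hex_port_period ring_node6)) //.
exact/eqP/(all_residuesP entry_ports_mod6).
Qed.

(* The second coordinate drops by 4 per period, so adjacent nodes lie in the
   same or in neighbouring periods; the rest is a finite check. *)
Lemma zigzag_adjacent m n k : zigzag m = (zigzag n + dir k)%R -> m = n.+1 \/ m.+1 = n.
Proof.
have residues : all (fun rm => all (fun rn => all (fun k => all (fun e : int =>
    [&& (zigzag rm).1 + 2 * e == (zigzag rn).1 + (dir k).1
      & (zigzag rm).2 - 4 * e == (zigzag rn).2 + (dir k).2]%R
    ==> ((6 * e + rm%:Z - rn%:Z == 1) || (6 * e + rm%:Z - rn%:Z == -1))%R)
    [:: -1; 0; 1]%R) ports) (iota 0 6)) (iota 0 6).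
  by vm_compute.
have heights : all (fun r => (-3 <= (zigzag r).2 <= 0)%R) (iota 0 6) by vm_compute.
have dir_height : (-1 <= (dir k).2 <= 1)%R by case: k => [[|[|[|[|[|[]]]]]]].
have hm := all_residuesP heights m; have hn := all_residuesP heights n.
move=> E; move: (congr1 fst E) (congr1 snd E).
rewrite {1 2}(divn_eq m 6) {1 2}(divn_eq n 6) !zigzag_shift !raddfD !raddfMn /= => E1 E2.
move: (all_portsP (all_residuesP (all_residuesP residues m) n) k).
move=> /allP/(_ ((m %/ 6)%:Z - (n %/ 6)%:Z)%R); rewrite !inE.
by move=> /(_ ltac:(lia))/implyP/(_ ltac:(lia)); lia.
Qed.

Lemma zigzag_inj : injective zigzag.
Proof.
move=> m n; wlog lt_mn : m n / m < n => [wlog_lt E|E].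
  by case: (ltngtP m n) => // [/wlog_lt/(_ E) | /wlog_lt/(_ (esym E))/esym].
have := @zigzag_adjacent n.+1 m (orient (zigzag_chirality (zigzag n)) (hex_port n)).
by rewrite E => /(_ erefl); lia.
Qed.

Lemma zigzag_nbrs N n : n.+1 < N -> walk_nbrs (walk_config zigzag N) zigzag_chirality zigzag n.
Proof.
move=> lt_nN j; apply/idP/idP.
  case/mapP=> m _ nbr_m; rewrite nbr_m.
  by case: (zigzag_adjacent (esym nbr_m)) => [-> | [->]]; rewrite !inE eqxx ?orbT.
by rewrite !inE => /orP[] /eqP ->; apply: mem_walk_config; lia.
Qed.

Lemma zigzag_valid N : valid_config (walk_config zigzag N).
Proof.
split; last exact: port_walk_connected.
  by rewrite (map_inj_uniq zigzag_inj) iota_uniq.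
by [].
Qed.

Lemma zigzag_mimics_ring (Q M : Type) (q0 : Q) (delta : transition Q M) N t i :
  t <= i -> i + t <= N ->
  st q0 delta (walk_config zigzag N) zigzag_chirality t (zigzag i)
  = st q0 delta ring (fun=> true) t (ring_node i).
Proof.
move=> le_ti le_iN.
have := exec_port_walk q0 delta zigzag_entry_port (fun n _ => ring_nbrs n) (@zigzag_nbrs N).
by move=> /(_ t i le_ti le_iN)/(congr1 fst).
Qed.

Definition final_irrevocable (Q : eqType) (M : Type) (q0 : Q) (delta : transition Q M)
    (final : pred Q) S chi :=
  forall t v, v \in S -> final (st q0 delta S chi t v) ->
    forall t', t <= t' -> st q0 delta S chi t' v = st q0 delta S chi t v.

Lemma final_state_unique (Q : eqType) (M : Type) (q0 : Q) (delta : transition Q M)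
    (final : pred Q) S chi v t1 t2 :
  final_irrevocable q0 delta final S chi ->
  v \in S -> final (st q0 delta S chi t1 v) -> final (st q0 delta S chi t2 v) ->
  st q0 delta S chi t1 v = st q0 delta S chi t2 v.
Proof.
move=> stable vS final1 final2.
by case: (leqP t1 t2) => [/(stable _ _ vS final1) | /ltnW/(stable _ _ vS final2)].
Qed.

Lemma count_eq1_inj (T : eqType) (P : pred T) s x y :
  count P s = 1 -> uniq s -> x \in s -> y \in s -> P x -> P y -> x = y.
Proof.
move=> count1 s_uniq xs ys Px Py; apply/eqP/negPn/negP => xy.
have : size [:: x; y] <= count P s.
  rewrite -size_filter uniq_leq_size //= ?inE ?xy // => z.
  by rewrite !inE mem_filter => /orP[] /eqP ->; rewrite ?Px ?Py.
by rewrite count1.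
Qed.

Lemma zigzag_copy_leader (Q : eqType) (M : Type) (q0 : Q) (delta : transition Q M)
    (final : pred Q) (leader : Q) N T T' l i :
  final_irrevocable q0 delta final (walk_config zigzag N) zigzag_chirality ->
  (forall v, v \in walk_config zigzag N ->
     final (st q0 delta (walk_config zigzag N) zigzag_chirality T' v)) ->
  final leader -> st q0 delta ring (fun=> true) T (ring_node l) = leader ->
  T <= i -> i + T <= N -> i = l %[mod 6] ->
  st q0 delta (walk_config zigzag N) zigzag_chirality T' (zigzag i) = leader.
Proof.
set B := walk_config zigzag N => stable B_final final_leader ring_leader le_Ti le_iN i_l.
have iB : zigzag i \in B by apply: mem_walk_config; lia.
have at_T : st q0 delta B zigzag_chirality T (zigzag i) = leader.
  by rewrite zigzag_mimics_ring // ring_node_mod i_l -ring_node_mod.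
have final_T : final (st q0 delta B zigzag_chirality T (zigzag i)) by rewrite at_T.
by rewrite (final_state_unique stable iB (B_final _ iB) final_T).
Qed.

Theorem theorem1 :
  forall (Q M : finType) (q0 : Q) (delta : transition Q M)
         (final : pred Q) (leader : Q),
    ~ solves_LE q0 delta final leader.
Proof.
move=> Q M q0 delta final leader solves.
have [_ [T [ring_final ring_leader1]]] := solves ring (fun=> true) ring_valid.
have [l l_lt6 ring_leader] :
    exists2 l, l < 6 & st q0 delta ring (fun=> true) T (ring_node l) = leader.
  have /hasP[_ /mapP[l + ->] /eqP] :
      has (fun v => st q0 delta ring (fun=> true) T v == leader) ring.
    by rewrite has_count ring_leader1.
  by rewrite mem_iota; exists l.
have final_leader : final leader.
  by rewrite -ring_leader; apply: ring_final; apply: mem_walk_config; lia.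
pose N := 7 * T + 12; pose B := walk_config zigzag N.
have [stable [T' [B_final B_leader1]]] := solves B zigzag_chirality (zigzag_valid N).
have [B_uniq _ _] := zigzag_valid N.
have copy_leader q : T <= q <= T.+1 ->
    st q0 delta B zigzag_chirality T' (zigzag (q * 6 + l)) == leader.
  move=> /andP[le_Tq le_qT]; apply/eqP.
  apply: zigzag_copy_leader stable B_final final_leader ring_leader _ _ _;
    by rewrite ?modnMDl; lia.
have := count_eq1_inj B_leader1 B_uniq
  (mem_walk_config zigzag (ltac:(lia) : T * 6 + l <= N))
  (mem_walk_config zigzag (ltac:(lia) : T.+1 * 6 + l <= N))
  (copy_leader T ltac:(lia)) (copy_leader T.+1 ltac:(lia)).
by move/zigzag_inj; lia.
Qed.
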